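(* The following first-order theories do not have the amalgamation property: (a) the theory of an antisymmetric binary relation $S$ together with two partial orders $\le$ and $\le'$, both finer than $S$ (i.e. ${\le}\subseteq S$ and ${\le'}\subseteq S$); (b) the theory of an antisymmetric binary relation $S$ together with two transitive binary relations, both finer than $S$; (c) the theory of a partial order $\le$ together with a coarser antisymmetric binary relation $S$ (${\le}\subseteq S$) and a bijective unary operation $f$ which is $S$-preserving ($x\,S\,y$ implies $f(x)\,S\,f(y)$).
   Context: A theory has the amalgamation property (AP) if whenever $\mathbf{A},\mathbf{B},\mathbf{C}$ are models with $\mathbf{C}\subseteq\mathbf{A}$, $\mathbf{C}\subseteq\mathbf{B}$ and $C=A\cap B$, there are a model $\mathbf{D}$ and embeddings of $\mathbf{A}$ and $\mathbf{B}$ into $\mathbf{D}$ which agree on $C$. *)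

Set Implicit Arguments.
Unset Strict Implicit.

Record sig3 (T : Type) := Sig3 {
  r0 : T -> T -> Prop;
  r1 : T -> T -> Prop;
  r2 : T -> T -> Prop }.

Definition emb3 (T U : Type) (M : sig3 T) (N : sig3 U) (g : T -> U) : Prop :=
  (forall x y, g x = g y -> x = y) /\
  (forall x y, (r0 M x y <-> r0 N (g x) (g y)) /\
               (r1 M x y <-> r1 N (g x) (g y)) /\
               (r2 M x y <-> r2 N (g x) (g y))).

Record sigF (T : Type) := SigF {
  rl : T -> T -> Prop;
  rs : T -> T -> Prop;
  fn : T -> T }.

Definition embF (T U : Type) (M : sigF T) (N : sigF U) (g : T -> U) : Prop :=
  (forall x y, g x = g y -> x = y) /\
  (forall x y, (rl M x y <-> rl N (g x) (g y)) /\
               (rs M x y <-> rs N (g x) (g y))) /\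
  (forall x, g (fn M x) = fn N (g x)).

Definition inclA (U : Type) (A B : U -> Prop) (c : {x : U | A x /\ B x}) : {x : U | A x} :=
  exist _ (proj1_sig c) (proj1 (proj2_sig c)).
Definition inclB (U : Type) (A B : U -> Prop) (c : {x : U | A x /\ B x}) : {x : U | B x} :=
  exist _ (proj1_sig c) (proj2 (proj2_sig c)).

(* Amalgamation property of a theory (given by its class of models Th).
   A, B are models whose universes are subsets of a common set U; C is a model on
   A ∩ B which is a substructure of both A and B (the inclusions are embeddings). *)
Definition AP3 (Th : forall T : Type, sig3 T -> Prop) : Prop :=
  forall (U : Type) (A B : U -> Prop)
         (MA : sig3 {x : U | A x}) (MB : sig3 {x : U | B x})
         (MC : sig3 {x : U | A x /\ B x}),
    Th _ MA -> Th _ MB -> Th _ MC ->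
    emb3 MC MA (@inclA U A B) -> emb3 MC MB (@inclB U A B) ->
    exists (D : Type) (MD : sig3 D) (fA : {x : U | A x} -> D) (fB : {x : U | B x} -> D),
      Th _ MD /\ emb3 MA MD fA /\ emb3 MB MD fB /\
      (forall c, fA (@inclA U A B c) = fB (@inclB U A B c)).

Definition APF (Th : forall T : Type, sigF T -> Prop) : Prop :=
  forall (U : Type) (A B : U -> Prop)
         (MA : sigF {x : U | A x}) (MB : sigF {x : U | B x})
         (MC : sigF {x : U | A x /\ B x}),
    Th _ MA -> Th _ MB -> Th _ MC ->
    embF MC MA (@inclA U A B) -> embF MC MB (@inclB U A B) ->
    exists (D : Type) (MD : sigF D) (fA : {x : U | A x} -> D) (fB : {x : U | B x} -> D),
      Th _ MD /\ embF MA MD fA /\ embF MB MD fB /\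
      (forall c, fA (@inclA U A B c) = fB (@inclB U A B c)).

Definition antisym (T : Type) (R : T -> T -> Prop) := forall x y, R x y -> R y x -> x = y.
Definition transitive (T : Type) (R : T -> T -> Prop) := forall x y z, R x y -> R y z -> R x z.
Definition reflexive (T : Type) (R : T -> T -> Prop) := forall x, R x x.
Definition partial_order (T : Type) (R : T -> T -> Prop) :=
  reflexive R /\ transitive R /\ antisym R.
Definition subrel (T : Type) (R R' : T -> T -> Prop) := forall x y, R x y -> R' x y.
Definition bijective (T : Type) (f : T -> T) :=
  (forall x y, f x = f y -> x = y) /\ (forall y, exists x, f x = y).

(* (a): r0 = S antisymmetric, r1 = ≤ and r2 = ≤' partial orders contained in S *)
Definition ThA (T : Type) (M : sig3 T) : Prop :=
  inhabited T /\ antisym (r0 M) /\ partial_order (r1 M) /\ partial_order (r2 M) /\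
  subrel (r1 M) (r0 M) /\ subrel (r2 M) (r0 M).

Definition ThB (T : Type) (M : sig3 T) : Prop :=
  inhabited T /\ antisym (r0 M) /\ transitive (r1 M) /\ transitive (r2 M) /\
  subrel (r1 M) (r0 M) /\ subrel (r2 M) (r0 M).

(* (c): rl = ≤ partial order, rs = S antisymmetric with ≤ ⊆ S, fn = f bijective, S-preserving *)
Definition ThC (T : Type) (M : sigF T) : Prop :=
  inhabited T /\ partial_order (rl M) /\ antisym (rs M) /\ subrel (rl M) (rs M) /\
  bijective (fn M) /\ (forall x y, rs M x y -> rs M (fn M x) (fn M y)).

From Stdlib Require Import Bool Eqdep_dec.

Set Implicit Arguments.

(* All counterexamples share C = {c1, c2}, with A = C + {a, fa} and B = C + {b, fb}
   (the points [ea], [efa], [eb], [efb] below).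
   For (a) and (b), A has c1 <= a <=' c2 and B has c2 <=' b <= c1.  In an amalgam,
   b <= c1 <= a and a <=' c2 <=' b, so transitivity and the antisymmetry of S identify
   a with b; but then a <= c1 would already hold in A.  For (c), f swaps a with fa and
   b with fb, A has c1 <= a and fa <= c2, and B has b <= c1 and c2 <= fb.  In an
   amalgam b <= a gives f b S f a, while fa <= fb gives fa S fb, so f a = f b and again
   a = b.  The points fa and fb are isolated in the models of (a) and (b). *)

Definition irrelevant {U : Type} (P : U -> Prop) : Prop := forall x (p q : P x), p = q.

Lemma bool_pred_irrelevant (U : Type) (p : U -> bool) : irrelevant (fun x => p x = true).
Proof. intros x; apply UIP_dec, bool_dec. Qed.

Lemma and_irrelevant (U : Type) (P Q : U -> Prop) :
  irrelevant P -> irrelevant Q -> irrelevant (fun x => P x /\ Q x).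
Proof. intros hP hQ x [p p'] [q q']; rewrite (hP x p q), (hQ x p' q'); reflexivity. Qed.

Section Restriction.
Context {U : Type} (P : U -> Prop).

Definition restr (R : U -> U -> Prop) (x y : {x | P x}) : Prop :=
  R (proj1_sig x) (proj1_sig y).

Lemma restr_reflexive (R : U -> U -> Prop) : reflexive R -> reflexive (restr R).
Proof. intros hR x; apply hR. Qed.

Lemma restr_subrel (R R' : U -> U -> Prop) : subrel R R' -> subrel (restr R) (restr R').
Proof. intros hR x y; apply hR. Qed.

Lemma restr_antisym (R : U -> U -> Prop) : irrelevant P -> antisym R -> antisym (restr R).
Proof. intros hP hR x y hxy hyx; apply (eq_sig_hprop hP), hR; assumption. Qed.

Definition restrict3 (M : sig3 U) : sig3 {x | P x} :=
  Sig3 (restr (r0 M)) (restr (r1 M)) (restr (r2 M)).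

Definition restrict_fun (f : U -> U) (cl : forall x, P x -> P (f x)) (x : {x | P x}) :
  {x | P x} := exist P (f (proj1_sig x)) (cl _ (proj2_sig x)).

Lemma restrict_fun_bijective (f : U -> U) (cl : forall x, P x -> P (f x)) :
  irrelevant P -> (forall x, f (f x) = x) -> bijective (restrict_fun f cl).
Proof.
  intros hP hf; split.
  - intros x y hxy; apply (eq_sig_hprop hP).
    apply (f_equal (fun z => f (proj1_sig z))) in hxy; simpl in hxy.
    rewrite !hf in hxy; exact hxy.
  - intros y; exists (restrict_fun f cl y); apply (eq_sig_hprop hP); apply hf.
Qed.

Definition restrictF (M : sigF U) (cl : forall x, P x -> P (fn M x)) : sigF {x | P x} :=
  SigF (restr (rl M)) (restr (rs M)) (restrict_fun (fn M) cl).

End Restriction.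

Section Inclusion.
Context {U : Type} {P Q : U -> Prop} (g : {x | P x} -> {x | Q x}).
Hypothesis g_val : forall x, proj1_sig (g x) = proj1_sig x.
Hypothesis P_irr : irrelevant P.

Lemma incl_injective : forall x y, g x = g y -> x = y.
Proof. intros x y hxy; apply (eq_sig_hprop P_irr); rewrite <- !g_val, hxy; reflexivity. Qed.

Lemma emb3_restrict3_incl (M : sig3 U) : emb3 (restrict3 P M) (restrict3 Q M) g.
Proof. split; [exact incl_injective|]; intros x y; simpl; unfold restr; rewrite !g_val; tauto. Qed.

Lemma embF_restrictF_incl (M : sigF U) (clP : forall x, P x -> P (fn M x))
    (clQ : forall x, Q x -> Q (fn M x)) :
  irrelevant Q -> embF (restrictF P M clP) (restrictF Q M clQ) g.
Proof.
  intros Q_irr; split; [exact incl_injective | split].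
  - intros x y; simpl; unfold restr; rewrite !g_val; tauto.
  - intros x; apply (eq_sig_hprop Q_irr); simpl; rewrite !g_val; reflexivity.
Qed.

End Inclusion.

Lemma emb3_r1 (T T' : Type) (M : sig3 T) (N : sig3 T') (g : T -> T') :
  emb3 M N g -> forall x y, r1 M x y <-> r1 N (g x) (g y).
Proof. intros [_ h] x y; apply (h x y). Qed.

Lemma emb3_r2 (T T' : Type) (M : sig3 T) (N : sig3 T') (g : T -> T') :
  emb3 M N g -> forall x y, r2 M x y <-> r2 N (g x) (g y).
Proof. intros [_ h] x y; apply (h x y). Qed.

Lemma embF_rl (T T' : Type) (M : sigF T) (N : sigF T') (g : T -> T') :
  embF M N g -> forall x y, rl M x y <-> rl N (g x) (g y).
Proof. intros [_ [h _]] x y; apply (h x y). Qed.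

Lemma embF_fn (T T' : Type) (M : sigF T) (N : sigF T') (g : T -> T') :
  embF M N g -> forall x, g (fn M x) = fn N (g x).
Proof. intros [_ [_ h]]; exact h. Qed.

Lemma cycle_collapse (T : Type) (S R1 R2 : T -> T -> Prop) {x y z w : T} :
  antisym S -> transitive R1 -> transitive R2 -> subrel R1 S -> subrel R2 S ->
  R1 x y -> R1 y z -> R2 z w -> R2 w x -> x = z.
Proof.
  intros anti t1 t2 s1 s2 hxy hyz hzw hwx.
  apply anti; [apply s1, (t1 x y z) | apply s2, (t2 z w x)]; assumption.
Qed.

Lemma twisted_cycle_collapse (T : Type) (L S : T -> T -> Prop) {f : T -> T} {x y z w : T} :
  transitive L -> subrel L S -> antisym S ->
  (forall x y, f x = f y -> x = y) -> (forall x y, S x y -> S (f x) (f y)) ->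
  L x y -> L y z -> L (f z) w -> L w (f x) -> x = z.
Proof.
  intros t sub anti inj pres hxy hyz hzw hwx.
  apply inj, anti; [apply pres, sub, (t x y z) | apply sub, (t (f z) w (f x))]; assumption.
Qed.

Lemma ThA_ThB (T : Type) (M : sig3 T) : ThA M -> ThB M.
Proof.
  intros (inh & anti & (_ & t1 & _) & (_ & t2 & _) & s1 & s2).
  split; [exact inh|]; repeat split; assumption.
Qed.

Inductive point := c1 | c2 | ea | efa | eb | efb.

Definition memA (x : point) : bool := match x with c1 | c2 | ea | efa => true | _ => false end.
Definition memB (x : point) : bool := match x with c1 | c2 | eb | efb => true | _ => false end.
Definition inA (x : point) : Prop := memA x = true.
Definition inB (x : point) : Prop := memB x = true.

Lemma inA_irrelevant : irrelevant inA.
Proof. exact (bool_pred_irrelevant memA). Qed.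

Lemma inB_irrelevant : irrelevant inB.
Proof. exact (bool_pred_irrelevant memB). Qed.

Lemma inC_irrelevant : irrelevant (fun x => inA x /\ inB x).
Proof. exact (and_irrelevant inA_irrelevant inB_irrelevant). Qed.

Definition cC1 : {x | inA x /\ inB x} := exist _ c1 (conj eq_refl eq_refl).
Definition cC2 : {x | inA x /\ inB x} := exist _ c2 (conj eq_refl eq_refl).
Definition aA : {x | inA x} := exist _ ea eq_refl.
Definition bB : {x | inB x} := exist _ eb eq_refl.

Ltac restr_transitive :=
  intros [x hx] [y hy] [z hz]; unfold restr; simpl; intros hxy hyz;
  unfold inA, inB in *; inversion hxy; subst; inversion hyz; subst;
  first [constructor | intuition discriminate].

Ltac antisym_by_cases :=
  intros [] [] [h|h] [h'|h']; simpl in *; first [reflexivity | solve [inversion h | inversion h']].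

Inductive le1 : point -> point -> Prop :=
  | le1_refl x : le1 x x
  | le1_c1_ea : le1 c1 ea
  | le1_eb_c1 : le1 eb c1.

Inductive le2 : point -> point -> Prop :=
  | le2_refl x : le2 x x
  | le2_ea_c2 : le2 ea c2
  | le2_c2_eb : le2 c2 eb.

Definition S12 (x y : point) : Prop := le1 x y \/ le2 x y.

Definition M12 : sig3 point := Sig3 S12 le1 le2.

Lemma S12_antisym : antisym S12.
Proof. antisym_by_cases. Qed.

Lemma le1_antisym : antisym le1.
Proof. intros x y h h'; inversion h; subst; inversion h'; reflexivity. Qed.

Lemma le2_antisym : antisym le2.
Proof. intros x y h h'; inversion h; subst; inversion h'; reflexivity. Qed.

Lemma ThA_restrict3 (P : point -> Prop) :
  irrelevant P -> inhabited {x | P x} ->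
  transitive (restr P le1) -> transitive (restr P le2) -> ThA (restrict3 P M12).
Proof.
  intros hP inh t1 t2; split; [exact inh|]; simpl.
  repeat split; try assumption;
    first [ apply restr_antisym; auto using S12_antisym, le1_antisym, le2_antisym
          | apply restr_reflexive; constructor
          | apply restr_subrel; unfold S12; intros ? ?; tauto ].
Qed.

Definition MA3 : sig3 {x | inA x} := restrict3 inA M12.
Definition MB3 : sig3 {x | inB x} := restrict3 inB M12.
Definition MC3 : sig3 {x | inA x /\ inB x} := restrict3 (fun x => inA x /\ inB x) M12.

Lemma ThA_MA3 : ThA MA3.
Proof.
  apply ThA_restrict3; [exact inA_irrelevant | exact (inhabits aA) | restr_transitive ..].
Qed.

Lemma ThA_MB3 : ThA MB3.
Proof.
  apply ThA_restrict3; [exact inB_irrelevant | exact (inhabits bB) | restr_transitive ..].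
Qed.

Lemma ThA_MC3 : ThA MC3.
Proof.
  apply ThA_restrict3; [exact inC_irrelevant | exact (inhabits cC1) | restr_transitive ..].
Qed.

Lemma not_AP3 (Th : forall T : Type, sig3 T -> Prop) :
  (forall T (M : sig3 T), Th T M -> ThB M) -> Th _ MA3 -> Th _ MB3 -> Th _ MC3 -> ~ AP3 Th.
Proof.
  intros hTh hA hB hC ap.
  destruct (ap point inA inB MA3 MB3 MC3 hA hB hC
              (emb3_restrict3_incl (@inclA _ inA inB) (fun _ => eq_refl) inC_irrelevant M12)
              (emb3_restrict3_incl (@inclB _ inA inB) (fun _ => eq_refl) inC_irrelevant M12))
    as (D & MD & fA & fB & hD & eA & eB & glue).
  destruct (hTh _ _ hD) as (_ & anti & t1 & t2 & s1 & s2).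
  assert (hab : fB bB = fA aA).
  { apply (cycle_collapse (y := fA (inclA cC1)) (w := fA (inclA cC2)) anti t1 t2 s1 s2).
    - rewrite glue; apply (emb3_r1 eB); constructor.
    - apply (emb3_r1 eA); constructor.
    - apply (emb3_r2 eA); constructor.
    - rewrite glue; apply (emb3_r2 eB); constructor. }
  assert (h : r1 MA3 aA (inclA cC1)).
  { apply (emb3_r1 eA); rewrite <- hab, glue; apply (emb3_r1 eB); constructor. }
  inversion h.
Qed.

Inductive lec : point -> point -> Prop :=
  | lec_refl x : lec x x
  | lec_c1_ea : lec c1 ea
  | lec_efa_c2 : lec efa c2
  | lec_eb_c1 : lec eb c1
  | lec_c2_efb : lec c2 efb.

Definition swap (x : point) : point :=
  match x with ea => efa | efa => ea | eb => efb | efb => eb | y => y end.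

Definition Sc (x y : point) : Prop := lec x y \/ lec (swap x) (swap y).

Definition Mc : sigF point := SigF lec Sc swap.

Lemma swap_involutive x : swap (swap x) = x.
Proof. destruct x; reflexivity. Qed.

Lemma Sc_swap x y : Sc x y -> Sc (swap x) (swap y).
Proof. intros [h|h]; [right | left]; rewrite ?swap_involutive; exact h. Qed.

Lemma Sc_antisym : antisym Sc.
Proof. antisym_by_cases. Qed.

Lemma lec_antisym : antisym lec.
Proof. intros x y h h'; inversion h; subst; inversion h'; reflexivity. Qed.

Lemma inA_swap x : inA x -> inA (swap x).
Proof. destruct x; exact (fun h => h). Qed.

Lemma inB_swap x : inB x -> inB (swap x).
Proof. destruct x; exact (fun h => h). Qed.

Lemma inC_swap x : inA x /\ inB x -> inA (swap x) /\ inB (swap x).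
Proof. intros [hA hB]; split; [apply inA_swap | apply inB_swap]; assumption. Qed.

Lemma ThC_restrictF (P : point -> Prop) (cl : forall x, P x -> P (swap x)) :
  irrelevant P -> inhabited {x | P x} -> transitive (restr P lec) -> ThC (restrictF P Mc cl).
Proof.
  intros hP inh t; split; [exact inh|]; simpl.
  split; [split; [|split] |]; try assumption.
  - apply restr_reflexive; constructor.
  - apply restr_antisym; [exact hP | exact lec_antisym].
  - split; [| split; [| split]].
    + apply restr_antisym; [exact hP | exact Sc_antisym].
    + apply restr_subrel; intros x y; left; assumption.
    + apply restrict_fun_bijective; [exact hP | exact swap_involutive].
    + intros x y; apply Sc_swap.
Qed.

Definition MAF : sigF {x | inA x} := restrictF inA Mc inA_swap.
Definition MBF : sigF {x | inB x} := restrictF inB Mc inB_swap.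
Definition MCF : sigF {x | inA x /\ inB x} := restrictF (fun x => inA x /\ inB x) Mc inC_swap.

Lemma ThC_MAF : ThC MAF.
Proof. apply ThC_restrictF; [exact inA_irrelevant | exact (inhabits aA) | restr_transitive]. Qed.

Lemma ThC_MBF : ThC MBF.
Proof. apply ThC_restrictF; [exact inB_irrelevant | exact (inhabits bB) | restr_transitive]. Qed.

Lemma ThC_MCF : ThC MCF.
Proof. apply ThC_restrictF; [exact inC_irrelevant | exact (inhabits cC1) | restr_transitive]. Qed.

Lemma not_APF_ThC : ~ APF ThC.
Proof.
  intros ap.
  destruct (ap point inA inB MAF MBF MCF ThC_MAF ThC_MBF ThC_MCF
              (embF_restrictF_incl (@inclA _ inA inB) (fun _ => eq_refl) inC_irrelevant Mc
                 inC_swap inA_swap inA_irrelevant)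
              (embF_restrictF_incl (@inclB _ inA inB) (fun _ => eq_refl) inC_irrelevant Mc
                 inC_swap inB_swap inB_irrelevant))
    as (D & MD & fA & fB & hD & eA & eB & glue).
  destruct hD as (_ & (_ & t & _) & anti & sub & (inj & _) & pres).
  assert (hab : fB bB = fA aA).
  { apply (twisted_cycle_collapse (y := fA (inclA cC1)) (w := fA (inclA cC2)) t sub anti inj pres).
    - rewrite glue; apply (embF_rl eB); constructor.
    - apply (embF_rl eA); constructor.
    - rewrite <- (embF_fn eA); apply (embF_rl eA); constructor.
    - rewrite glue, <- (embF_fn eB); apply (embF_rl eB); constructor. }
  assert (h : rl MAF aA (inclA cC1)).
  { apply (embF_rl eA); rewrite <- hab, glue; apply (embF_rl eB); constructor. }
  inversion h.
Qed.

Theorem proposition3p5 : ~ AP3 ThA /\ ~ AP3 ThB /\ ~ APF ThC.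
Proof.
  split; [| split].
  - apply not_AP3; [exact ThA_ThB | exact ThA_MA3 | exact ThA_MB3 | exact ThA_MC3].
  - apply not_AP3; [intros T M h; exact h | apply ThA_ThB, ThA_MA3 | apply ThA_ThB, ThA_MB3
                   | apply ThA_ThB, ThA_MC3].
  - exact not_APF_ThC.
Qed.
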